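(* Let $\tilde X^1,\tilde X^2,\tilde X^3$ be the restrictions to the unit sphere $S^2\subset\mathbb{R}^3$ of the Cartesian coordinate functions, and on $S^2\setminus\{(0,0,1)\}$ define the complex-valued functions $Z=\dfrac{\tilde X^1+i\tilde X^2}{1-\tilde X^3}$, $\bar Z=\dfrac{\tilde X^1-i\tilde X^2}{1-\tilde X^3}$, and the complex vector field $\mathring Y^A=(\epsilon^{CD}\nabla_CZ\nabla_D\bar Z)^{-1}\epsilon^{AB}\nabla_B\bar Z$. For an integer $m$, let $Y^A=Z^{m+1}\mathring Y^A$. Then \[(\Delta+2)\nabla_AY^A=0\quad\text{on }S^2\setminus\{(0,0,1)\}.\]
   Context: $S^2$ carries the round metric $\sigma_{AB}$ induced from $\mathbb{R}^3$, with area form $\epsilon_{AB}$, Levi-Civita connection $\nabla$ and Laplacian $\Delta$ (extended complex-linearly to complex-valued functions and fields); indices raised/lowered with $\sigma$. *)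

From Stdlib Require Import Reals ZArith.
From Coquelicot Require Import Coquelicot.
Open Scope R_scope.

Definition pt := (R * R * R)%type.
Definition px (p : pt) : R := fst (fst p).
Definition py (p : pt) : R := snd (fst p).
Definition pz (p : pt) : R := snd p.

Definition on_sphere (p : pt) : Prop := px p ^ 2 + py p ^ 2 + pz p ^ 2 = 1.
Definition north_pole : pt := (0, 0, 1).
Definition south_pole : pt := (0, 0, -1).

Definition pnorm (p : pt) : R := sqrt (px p ^ 2 + py p ^ 2 + pz p ^ 2).
Definition normalize (p : pt) : pt :=
  (px p / pnorm p, py p / pnorm p, pz p / pnorm p).

Definition pdx (f : pt -> R) (p : pt) : R := Derive (fun t => f (t, py p, pz p)) (px p).
Definition pdy (f : pt -> R) (p : pt) : R := Derive (fun t => f (px p, t, pz p)) (py p).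
Definition pdz (f : pt -> R) (p : pt) : R := Derive (fun t => f (px p, py p, t)) (pz p).

Definition cpdx (F : pt -> C) (p : pt) : C :=
  (pdx (fun q => Re (F q)) p, pdx (fun q => Im (F q)) p).
Definition cpdy (F : pt -> C) (p : pt) : C :=
  (pdy (fun q => Re (F q)) p, pdy (fun q => Im (F q)) p).
Definition cpdz (F : pt -> C) (p : pt) : C :=
  (pdz (fun q => Re (F q)) p, pdz (fun q => Im (F q)) p).

(* complex vectors in C^3 (complexified tangent vectors of S^2 viewed in R^3) *)
Definition cvec := (C * C * C)%type.
Definition cv1 (v : cvec) : C := fst (fst v).
Definition cv2 (v : cvec) : C := snd (fst v).
Definition cv3 (v : cvec) : C := snd v.
Definition cdot (u v : cvec) : C :=
  Cplus (Cplus (Cmult (cv1 u) (cv1 v)) (Cmult (cv2 u) (cv2 v))) (Cmult (cv3 u) (cv3 v)).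
Definition ccross (u v : cvec) : cvec :=
  (Cminus (Cmult (cv2 u) (cv3 v)) (Cmult (cv3 u) (cv2 v)),
   Cminus (Cmult (cv3 u) (cv1 v)) (Cmult (cv1 u) (cv3 v)),
   Cminus (Cmult (cv1 u) (cv2 v)) (Cmult (cv2 u) (cv1 v))).
Definition cscale (a : C) (v : cvec) : cvec :=
  (Cmult a (cv1 v), Cmult a (cv2 v), Cmult a (cv3 v)).

(* Intrinsic calculus on the round S^2, realised through the embedding:
   a function f on S^2 (only its values on S^2 matter) is extended to be
   0-homogeneous, f o normalize; at points of S^2:
   - sgrad f  = nabla_A f  (tangential gradient, = R^3 gradient of f o normalize);
   - sdiv V   = nabla_A V^A for a tangent field V (= R^3 divergence of V o normalize);
   - slap f   = Delta f = nabla^A nabla_A f. *)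
Definition sgrad (f : pt -> C) (p : pt) : cvec :=
  (cpdx (fun q => f (normalize q)) p,
   cpdy (fun q => f (normalize q)) p,
   cpdz (fun q => f (normalize q)) p).
Definition sdiv (V : pt -> cvec) (p : pt) : C :=
  Cplus (Cplus (cpdx (fun q => cv1 (V (normalize q))) p)
               (cpdy (fun q => cv2 (V (normalize q))) p))
        (cpdz (fun q => cv3 (V (normalize q))) p).
Definition slap (f : pt -> C) (p : pt) : C := sdiv (sgrad f) p.

Definition normal (p : pt) : cvec := (RtoC (px p), RtoC (py p), RtoC (pz p)).

(* area form: eps_{AB} u^A v^B = n . (u x v); hence
   eps^{AB} nabla_B g = nabla g x n   and
   eps^{CD} nabla_C f nabla_D g = n . (nabla f x nabla g). *)
Definition eps_grad (g : pt -> C) (p : pt) : cvec := ccross (sgrad g p) (normal p).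
Definition eps_pair (f g : pt -> C) (p : pt) : C :=
  cdot (normal p) (ccross (sgrad f p) (sgrad g p)).

Definition Xt1 (p : pt) : C := RtoC (px p).
Definition Xt2 (p : pt) : C := RtoC (py p).
Definition Xt3 (p : pt) : C := RtoC (pz p).
Definition Zst (p : pt) : C :=
  Cdiv (Cplus (Xt1 p) (Cmult Ci (Xt2 p))) (Cminus (RtoC 1) (Xt3 p)).
Definition Zbar (p : pt) : C :=
  Cdiv (Cminus (Xt1 p) (Cmult Ci (Xt2 p))) (Cminus (RtoC 1) (Xt3 p)).

Definition Ycirc (p : pt) : cvec := cscale (Cinv (eps_pair Zst Zbar p)) (eps_grad Zbar p).

Definition Czpow (z : C) (k : Z) : C :=
  match k with
  | Z0 => RtoC 1
  | Zpos n => Cpow z (Pos.to_nat n)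
  | Zneg n => Cinv (Cpow z (Pos.to_nat n))
  end.

Definition Yfield (m : Z) (p : pt) : cvec := cscale (Czpow (Zst p) (m + 1)) (Ycirc p).

(* In the stereographic coordinate Z the field Ycirc is the coordinate field d/dZ: it is dual
   to dZ (Ycirc^A nabla_A Z = 1 is a triple-product identity) and its divergence is -W, where
   W = X^1 - i X^2 = 2 Zbar / (1 + Z Zbar) comes from the conformal factor 4 / (1 + Z Zbar)^2.
   Hence, with k = m + 1, nabla_A Y^A = psi := k Z^(k-1) - Z^k W.  Since Z is conformal and
   harmonic (nabla Z . nabla Z = 0, Delta Z = 0), W is a first spherical harmonic
   (Delta W = -2 W) and nabla Z . nabla W = 1, the product rules for nabla and Delta give
   Delta psi = 2 Z^k W - 2 k Z^(k-1) = -2 psi.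
   The intrinsic operators are those of the 0-homogeneous extension to R^3, so everything is
   computed by differentiating along coordinate lines, and the few explicit gradients and
   divergences reduce to polynomial identities on the sphere. *)

From Stdlib Require Import Reals ZArith Lia Lra Nsatz.
From Coquelicot Require Import Coquelicot.
Open Scope R_scope.

Ltac csimpl := cbn [fst snd Re Im Cplus Cmult Cminus Copp Cinv RtoC Ci Cdiv cscale cv1 cv2 cv3].

(** * Derivatives of complex-valued functions of a real variable *)

Lemma is_derive_eq (f : R -> R) (x l l' : R) : is_derive f x l -> l = l' -> is_derive f x l'.
Proof. now intros H <-. Qed.

Lemma is_derive_Rconst (c x : R) : is_derive (fun _ => c) x 0.
Proof. apply (is_derive_const c). Qed.

Lemma is_derive_Rplus (f g : R -> R) (x df dg : R) :
  is_derive f x df -> is_derive g x dg -> is_derive (fun t => f t + g t) x (df + dg).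
Proof. apply (is_derive_plus f g). Qed.

Lemma is_derive_Ropp (f : R -> R) (x df : R) :
  is_derive f x df -> is_derive (fun t => - f t) x (- df).
Proof. apply (is_derive_opp f). Qed.

Lemma is_derive_Rminus (f g : R -> R) (x df dg : R) :
  is_derive f x df -> is_derive g x dg -> is_derive (fun t => f t - g t) x (df - dg).
Proof. apply (is_derive_minus f g). Qed.

Lemma is_derive_Rmult (f g : R -> R) (x df dg : R) :
  is_derive f x df -> is_derive g x dg -> is_derive (fun t => f t * g t) x (df * g x + f x * dg).
Proof. intros Hf Hg; apply (is_derive_mult f g); auto; intros; apply Rmult_comm. Qed.

Definition is_derive_C (F : R -> C) (t : R) (l : C) : Prop :=
  is_derive (fun x => Re (F x)) t (Re l) /\ is_derive (fun x => Im (F x)) t (Im l).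

Lemma is_derive_C_eq (F : R -> C) (t : R) (l l' : C) :
  is_derive_C F t l -> l = l' -> is_derive_C F t l'.
Proof. now intros H <-. Qed.

Lemma is_derive_C_ext_loc (F G : R -> C) (t : R) (l : C) :
  locally t (fun x => F x = G x) -> is_derive_C F t l -> is_derive_C G t l.
Proof.
  intros Hl [H1 H2]; split; eapply is_derive_ext_loc; eauto;
    eapply filter_imp; try exact Hl; now intros x ->.
Qed.

Lemma is_derive_C_const (c : C) (t : R) : is_derive_C (fun _ => c) t 0.
Proof. split; apply is_derive_Rconst. Qed.

Lemma is_derive_C_RtoC (f : R -> R) (t l : R) :
  is_derive f t l -> is_derive_C (fun x => RtoC (f x)) t l.
Proof. intros H; split; csimpl; [exact H | apply is_derive_Rconst]. Qed.

Lemma is_derive_C_plus (F G : R -> C) (t : R) (lf lg : C) :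
  is_derive_C F t lf -> is_derive_C G t lg -> is_derive_C (fun x => F x + G x)%C t (lf + lg)%C.
Proof. intros [F1 F2] [G1 G2]; split; csimpl; now apply is_derive_Rplus. Qed.

Lemma is_derive_C_opp (F : R -> C) (t : R) (lf : C) :
  is_derive_C F t lf -> is_derive_C (fun x => - F x)%C t (- lf)%C.
Proof. intros [F1 F2]; split; csimpl; now apply is_derive_Ropp. Qed.

Lemma is_derive_C_minus (F G : R -> C) (t : R) (lf lg : C) :
  is_derive_C F t lf -> is_derive_C G t lg -> is_derive_C (fun x => F x - G x)%C t (lf - lg)%C.
Proof. intros HF HG; apply is_derive_C_plus, is_derive_C_opp; assumption. Qed.

Lemma is_derive_C_mult (F G : R -> C) (t : R) (lf lg : C) :
  is_derive_C F t lf -> is_derive_C G t lg ->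
  is_derive_C (fun x => F x * G x)%C t (lf * G t + F t * lg)%C.
Proof.
  intros [F1 F2] [G1 G2]; split; csimpl.
  - eapply is_derive_eq; [apply is_derive_Rminus; apply is_derive_Rmult; eassumption |].
    unfold Re, Im; ring.
  - eapply is_derive_eq; [apply is_derive_Rplus; apply is_derive_Rmult; eassumption |].
    unfold Re, Im; ring.
Qed.

Lemma is_derive_C_inv (F : R -> C) (t : R) (lf : C) :
  is_derive_C F t lf -> F t <> 0%C ->
  is_derive_C (fun x => / F x)%C t (- lf / (F t * F t))%C.
Proof.
  intros [F1 F2] Hz.
  assert (Hn : fst (F t) ^ 2 + snd (F t) ^ 2 <> 0).
  { intros E; apply Hz; destruct (F t) as [a b]; cbn in E.
    assert (a * a + b * b = 0) as E' by (rewrite <- E; ring).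
    now destruct (Rplus_sqr_eq_0 a b E') as [-> ->]. }
  assert (Hd : is_derive (fun x => fst (F x) ^ 2 + snd (F x) ^ 2) t
                 (2 * fst (F t) * Re lf + 2 * snd (F t) * Im lf)).
  { eapply is_derive_eq; [apply is_derive_Rplus;
      [apply (is_derive_pow (fun x => fst (F x))), F1 | apply (is_derive_pow (fun x => snd (F x))), F2] |].
    change (INR 2) with 2; unfold Re, Im; cbn [Init.Nat.pred]; ring. }
  split; csimpl.
  - eapply is_derive_eq; [apply (is_derive_div (fun x => fst (F x))); eassumption |].
    revert Hn; unfold Re, Im; destruct (F t) as [a b], lf as [c d]; csimpl; intros.
    replace ((a * a - b * b) ^ 2 + (a * b + b * a) ^ 2) with ((a ^ 2 + b ^ 2) ^ 2) by ring.
    field; exact Hn.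
  - eapply is_derive_eq; [apply (is_derive_div (fun x => - snd (F x)));
      [apply is_derive_Ropp, F2 | exact Hd | exact Hn] |].
    revert Hn; unfold Re, Im; destruct (F t) as [a b], lf as [c d]; csimpl; intros.
    replace ((a * a - b * b) ^ 2 + (a * b + b * a) ^ 2) with ((a ^ 2 + b ^ 2) ^ 2) by ring.
    field; exact Hn.
Qed.

Lemma is_derive_C_Cpow (F : R -> C) (t : R) (lf : C) (n : nat) :
  is_derive_C F t lf -> is_derive_C (fun x => F x ^ n)%C t (INR n * F t ^ pred n * lf)%C.
Proof.
  intros H; induction n as [|n IH].
  - change (fun x => F x ^ 0)%C with (fun _ : R => RtoC 1).
    eapply is_derive_C_eq; [apply is_derive_C_const |]. change (INR 0) with 0; ring.
  - change (fun x => F x ^ S n)%C with (fun x => F x * F x ^ n)%C.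
    eapply is_derive_C_eq; [apply is_derive_C_mult; eassumption |].
    rewrite S_INR, RtoC_plus; destruct n as [|n]; cbn [pred Cpow]; [change (INR 0) with 0 |]; ring.
Qed.

Lemma Czpow_of_nat (z : C) (n : nat) : Czpow z (Z.of_nat n) = (z ^ n)%C.
Proof. destruct n; [reflexivity |]. unfold Z.of_nat, Czpow; now rewrite SuccNat2Pos.id_succ. Qed.

Lemma is_derive_C_Czpow (F : R -> C) (t : R) (lf : C) (k : Z) :
  is_derive_C F t lf -> (F t <> 0%C \/ (0 <= k)%Z) ->
  is_derive_C (fun x => Czpow (F x) k) t (IZR k * Czpow (F t) (k - 1) * lf)%C.
Proof.
  intros H Hk; destruct k as [|n|n].
  - change (fun x => Czpow (F x) 0) with (fun _ : R => RtoC 1).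
    eapply is_derive_C_eq; [apply is_derive_C_const |]. change (IZR 0) with 0; ring.
  - change (fun x => Czpow (F x) (Z.pos n)) with (fun x => F x ^ Pos.to_nat n)%C.
    eapply is_derive_C_eq; [apply (is_derive_C_Cpow F t lf (Pos.to_nat n) H) |].
    replace (Z.pos n - 1)%Z with (Z.of_nat (pred (Pos.to_nat n))) by lia.
    now rewrite Czpow_of_nat, <- positive_nat_Z, <- INR_IZR_INZ.
  - destruct Hk as [Hz | Hk]; [| lia].
    destruct (Pos2Nat.is_succ n) as [N HN].
    change (fun x => Czpow (F x) (Z.neg n)) with (fun x => / F x ^ Pos.to_nat n)%C.
    eapply is_derive_C_eq.
    { apply (is_derive_C_inv (fun x => F x ^ Pos.to_nat n)%C); [apply is_derive_C_Cpow, H |].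
      now apply Cpow_nz. }
    replace (Z.neg n - 1)%Z with (Z.neg (Pos.of_succ_nat (S N))) by lia.
    replace (IZR (Z.neg n)) with (- INR (S N)) by (rewrite <- HN, INR_IZR_INZ, positive_nat_Z; reflexivity).
    unfold Czpow; rewrite SuccNat2Pos.id_succ, HN.
    pose proof (Cpow_nz _ N Hz).
    cbn [pred Cpow]; rewrite RtoC_opp; field; auto.
Qed.

(* [c * z ^ j] is differentiable in [z] as soon as one of these holds; the last disjunct covers
   a vanishing coefficient in front of a negative power, as for [k * Z ^ (k - 1)] with [k = 0]
   at the south pole, where [Czpow 0 (-1)] is the junk value [/ 0 = 0]. *)
Definition zpow_regular (c : R) (j : Z) (z : C) : Prop := z <> 0%C \/ (0 <= j)%Z \/ c = 0.

Lemma zpow_regular_deriv (c : R) (j : Z) (z : C) :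
  zpow_regular c j z -> zpow_regular (c * IZR j) (j - 1) z.
Proof.
  intros [Hz | [Hj | ->]]; [now left | | now right; right; apply Rmult_0_l].
  destruct (Z.eq_dec j 0) as [-> | Hj0]; [right; right; apply Rmult_0_r | right; left; lia].
Qed.

Lemma is_derive_C_scal_Czpow (F : R -> C) (t : R) (lf : C) (c : R) (j : Z) :
  is_derive_C F t lf -> zpow_regular c j (F t) ->
  is_derive_C (fun x => c * Czpow (F x) j)%C t (RtoC (c * IZR j) * Czpow (F t) (j - 1) * lf)%C.
Proof.
  intros H Hreg; destruct (Req_dec c 0) as [-> | Hc].
  - apply (is_derive_C_ext_loc (fun _ => RtoC 0)); [apply filter_forall; intros x; ring |].
    eapply is_derive_C_eq; [apply is_derive_C_const |]. rewrite Rmult_0_l; ring.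
  - eapply is_derive_C_eq.
    { apply is_derive_C_mult; [apply is_derive_C_const | apply is_derive_C_Czpow; [exact H |]].
      destruct Hreg as [Hz | [Hj | Hc0]]; [now left | now right | contradiction]. }
    rewrite RtoC_mult; ring.
Qed.

(** * Calculus on the sphere along coordinate lines *)

Inductive axis : Set := e1 | e2 | e3.

Definition coord (j : axis) (q : pt) : R :=
  match j with e1 => px q | e2 => py q | e3 => pz q end.

Definition line (j : axis) (s : pt) (t : R) : pt :=
  match j with e1 => (t, py s, pz s) | e2 => (px s, t, pz s) | e3 => (px s, py s, t) end.

Definition kron (i j : axis) : R :=
  match i, j with e1, e1 | e2, e2 | e3, e3 => 1 | _, _ => 0 end.

Definition ccomp (j : axis) (v : cvec) : C :=
  match j with e1 => cv1 v | e2 => cv2 v | e3 => cv3 v end.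

Definition cpd (j : axis) (F : pt -> C) : pt -> C :=
  match j with e1 => cpdx F | e2 => cpdy F | e3 => cpdz F end.

Lemma line_at_coord (j : axis) (s : pt) : line j s (coord j s) = s.
Proof. destruct s as [[a b] c]; now destruct j. Qed.

Lemma normalize_on_sphere (s : pt) : on_sphere s -> normalize s = s.
Proof.
  destruct s as [[a b] c]; unfold on_sphere, normalize, pnorm; cbn; intros H.
  rewrite H, sqrt_1; f_equal; [f_equal |]; field.
Qed.

Lemma normalize_line_at (j : axis) (s : pt) : on_sphere s -> normalize (line j s (coord j s)) = s.
Proof. intros H; now rewrite line_at_coord, normalize_on_sphere. Qed.

Lemma on_sphere_normalize (q : pt) : 0 < px q ^ 2 + py q ^ 2 + pz q ^ 2 -> on_sphere (normalize q).
Proof.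
  destruct q as [[x y] z]; unfold on_sphere, normalize, pnorm; cbn [px py pz fst snd]; intros H.
  assert (E : sqrt (x ^ 2 + y ^ 2 + z ^ 2) ^ 2 = x ^ 2 + y ^ 2 + z ^ 2) by (apply pow2_sqrt; lra).
  pose proof (sqrt_lt_R0 _ H); field_simplify; [rewrite E; field |]; lra.
Qed.

Lemma cpd_is_derive_C (j : axis) (F : pt -> C) (s : pt) (l : C) :
  is_derive_C (fun t => F (line j s t)) (coord j s) l -> cpd j F s = l.
Proof.
  intros [H1 H2]; destruct l as [l1 l2].
  destruct j; unfold cpd, cpdx, cpdy, cpdz, pdx, pdy, pdz; f_equal; now apply is_derive_unique.
Qed.

Lemma is_derive_coord_normalize (i j : axis) (s : pt) : on_sphere s ->
  is_derive (fun t => coord i (normalize (line j s t))) (coord j s)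
    (kron i j - coord i s * coord j s).
Proof.
  destruct s as [[a b] c]; unfold on_sphere; cbn [px py pz fst snd]; intros Hs.
  assert (E : a * (a * 1) + b * (b * 1) + c * (c * 1) = 1) by nra.
  destruct i, j; unfold normalize, pnorm; cbn [coord line kron px py pz fst snd];
    auto_derive; rewrite ?E, ?sqrt_1; repeat split; lra.
Qed.

Lemma is_derive_C_coord (i j : axis) (s : pt) : on_sphere s ->
  is_derive_C (fun t => RtoC (coord i (normalize (line j s t)))) (coord j s)
    (RtoC (kron i j - coord i s * coord j s)).
Proof.
  intros Hs; apply (is_derive_C_RtoC (fun t => coord i (normalize (line j s t)))).
  now apply is_derive_coord_normalize.
Qed.

Definition cvplus (u v : cvec) : cvec := (cv1 u + cv1 v, cv2 u + cv2 v, cv3 u + cv3 v)%C.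
Definition cvminus (u v : cvec) : cvec := (cv1 u - cv1 v, cv2 u - cv2 v, cv3 u - cv3 v)%C.

Lemma cdot_comm (u v : cvec) : cdot u v = cdot v u.
Proof. unfold cdot; ring. Qed.

Lemma cdot_cscale_l (a : C) (u v : cvec) : cdot (cscale a u) v = (a * cdot u v)%C.
Proof. unfold cdot, cscale, cv1, cv2, cv3; cbn; ring. Qed.

Lemma cdot_cscale_r (a : C) (u v : cvec) : cdot u (cscale a v) = (a * cdot u v)%C.
Proof. now rewrite cdot_comm, cdot_cscale_l, cdot_comm. Qed.

Definition has_sgrad (f : pt -> C) (s : pt) (g : cvec) : Prop :=
  forall j, is_derive_C (fun t => f (normalize (line j s t))) (coord j s) (ccomp j g).

Definition has_sdiv (V : pt -> cvec) (s : pt) (d : C) : Prop :=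
  exists dV : axis -> C,
    (forall j, is_derive_C (fun t => ccomp j (V (normalize (line j s t)))) (coord j s) (dV j)) /\
    d = (dV e1 + dV e2 + dV e3)%C.

(* [sgrad] and [sdiv] only see a function along the coordinate lines through a point, so this
   is the openness needed to compute a Laplacian from a gradient known on [U]. *)
Definition line_open (U : pt -> Prop) : Prop :=
  forall s j, U s -> locally (coord j s) (fun t => U (normalize (line j s t))).

Lemma sgrad_eq (f : pt -> C) (s : pt) (g : cvec) : has_sgrad f s g -> sgrad f s = g.
Proof.
  intros H; destruct g as [[g1 g2] g3].
  change (sgrad f s) with (cpd e1 (fun q => f (normalize q)) s,
    cpd e2 (fun q => f (normalize q)) s, cpd e3 (fun q => f (normalize q)) s).
  now rewrite !cpd_is_derive_C with (l := ccomp _ (g1, g2, g3)) by apply H.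
Qed.

Lemma sdiv_eq (V : pt -> cvec) (s : pt) (d : C) : has_sdiv V s d -> sdiv V s = d.
Proof.
  intros [dV [H ->]].
  change (sdiv V s) with (cpd e1 (fun q => ccomp e1 (V (normalize q))) s +
    cpd e2 (fun q => ccomp e2 (V (normalize q))) s + cpd e3 (fun q => ccomp e3 (V (normalize q))) s)%C.
  now rewrite !cpd_is_derive_C with (l := dV _) by apply H.
Qed.

Lemma has_sdiv_eq (V : pt -> cvec) (s : pt) (d d' : C) : has_sdiv V s d -> d = d' -> has_sdiv V s d'.
Proof. now intros H <-. Qed.

Lemma has_sdivI (V : pt -> cvec) (s : pt) (d1 d2 d3 : C) :
  is_derive_C (fun t => cv1 (V (normalize (line e1 s t)))) (coord e1 s) d1 ->
  is_derive_C (fun t => cv2 (V (normalize (line e2 s t)))) (coord e2 s) d2 ->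
  is_derive_C (fun t => cv3 (V (normalize (line e3 s t)))) (coord e3 s) d3 ->
  has_sdiv V s (d1 + d2 + d3)%C.
Proof.
  intros H1 H2 H3; exists (fun j => match j with e1 => d1 | e2 => d2 | e3 => d3 end).
  split; [intros []; assumption | reflexivity].
Qed.

Lemma has_sgrad_ext_on (U : pt -> Prop) (f g : pt -> C) (s : pt) (G : cvec) :
  line_open U -> U s -> (forall q, U q -> f q = g q) -> has_sgrad f s G -> has_sgrad g s G.
Proof.
  intros HU Hs Hfg H j; apply (is_derive_C_ext_loc (fun t => f (normalize (line j s t)))); [| apply H].
  eapply filter_imp; [| exact (HU s j Hs)]; auto.
Qed.

Lemma has_sdiv_ext_loc (V W : pt -> cvec) (s : pt) (d : C) :
  (forall j, locally (coord j s) (fun t => V (normalize (line j s t)) = W (normalize (line j s t)))) ->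
  has_sdiv V s d -> has_sdiv W s d.
Proof.
  intros HVW [dV [H ->]]; exists dV; split; [| reflexivity]; intros j.
  apply (is_derive_C_ext_loc (fun t => ccomp j (V (normalize (line j s t))))); [| apply H].
  eapply filter_imp; [| exact (HVW j)]; now intros t ->.
Qed.

Section SphereCalculus.

Variable s : pt.
Hypothesis Hs : on_sphere s.

Lemma has_sgrad_minus (f g : pt -> C) (gf gg : cvec) :
  has_sgrad f s gf -> has_sgrad g s gg -> has_sgrad (fun q => f q - g q)%C s (cvminus gf gg).
Proof.
  intros Hf Hg j; destruct j; apply is_derive_C_minus;
    [apply Hf | apply Hg | apply Hf | apply Hg | apply Hf | apply Hg].
Qed.

Lemma has_sgrad_mult (f g : pt -> C) (gf gg : cvec) :
  has_sgrad f s gf -> has_sgrad g s gg ->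
  has_sgrad (fun q => f q * g q)%C s (cvplus (cscale (f s) gg) (cscale (g s) gf)).
Proof.
  intros Hf Hg j; eapply is_derive_C_eq; [apply is_derive_C_mult; [apply Hf | apply Hg] |].
  cbv beta; rewrite normalize_line_at by exact Hs; destruct j; cbn; ring.
Qed.

Lemma has_sgrad_Czpow (f : pt -> C) (gf : cvec) (k : Z) :
  has_sgrad f s gf -> (f s <> 0%C \/ (0 <= k)%Z) ->
  has_sgrad (fun q => Czpow (f q) k) s (cscale (IZR k * Czpow (f s) (k - 1)) gf).
Proof.
  intros Hf Hk j; eapply is_derive_C_eq.
  - apply is_derive_C_Czpow; [apply Hf | now rewrite normalize_line_at].
  - cbv beta; rewrite normalize_line_at by exact Hs; now destruct j.
Qed.

Lemma has_sgrad_scal_Czpow (f : pt -> C) (gf : cvec) (c : R) (k : Z) :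
  has_sgrad f s gf -> zpow_regular c k (f s) ->
  has_sgrad (fun q => c * Czpow (f q) k)%C s (cscale (RtoC (c * IZR k) * Czpow (f s) (k - 1)) gf).
Proof.
  intros Hf Hk j; eapply is_derive_C_eq.
  - apply is_derive_C_scal_Czpow; [apply Hf | now rewrite normalize_line_at].
  - cbv beta; rewrite normalize_line_at by exact Hs; now destruct j.
Qed.

Lemma has_sdiv_plus (V W : pt -> cvec) (dV dW : C) :
  has_sdiv V s dV -> has_sdiv W s dW -> has_sdiv (fun q => cvplus (V q) (W q)) s (dV + dW)%C.
Proof.
  intros [DV [HV ->]] [DW [HW ->]]; exists (fun j => DV j + DW j)%C; split; [| ring].
  intros j; destruct j; apply is_derive_C_plus;
    [apply HV | apply HW | apply HV | apply HW | apply HV | apply HW].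
Qed.

Lemma has_sdiv_minus (V W : pt -> cvec) (dV dW : C) :
  has_sdiv V s dV -> has_sdiv W s dW -> has_sdiv (fun q => cvminus (V q) (W q)) s (dV - dW)%C.
Proof.
  intros [DV [HV ->]] [DW [HW ->]]; exists (fun j => DV j - DW j)%C; split; [| ring].
  intros j; destruct j; apply is_derive_C_minus;
    [apply HV | apply HW | apply HV | apply HW | apply HV | apply HW].
Qed.

Lemma has_sdiv_scal (a : pt -> C) (ga : cvec) (V : pt -> cvec) (d : C) :
  has_sgrad a s ga -> has_sdiv V s d ->
  has_sdiv (fun q => cscale (a q) (V q)) s (a s * d + cdot ga (V s))%C.
Proof.
  intros Ha [DV [HV ->]].
  exists (fun j => ccomp j ga * ccomp j (V s) + a s * DV j)%C; split.
  - intros j; eapply is_derive_C_eq.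
    + destruct j; exact (is_derive_C_mult _ _ _ _ _ (Ha _) (HV _)).
    + cbv beta; now rewrite normalize_line_at.
  - unfold cdot; cbn; ring.
Qed.

End SphereCalculus.

Lemma slap_eq (U : pt -> Prop) (f : pt -> C) (G : pt -> cvec) (s : pt) (d : C) :
  line_open U -> U s -> (forall q, U q -> has_sgrad f q (G q)) -> has_sdiv G s d -> slap f s = d.
Proof.
  intros HU Hs HG Hd; apply sdiv_eq; revert Hd; apply has_sdiv_ext_loc; intros j.
  eapply filter_imp; [| exact (HU s j Hs)]; intros t Ht; symmetry; now apply sgrad_eq, HG.
Qed.

Ltac auto_derive_C_step :=
  lazymatch goal with
  | |- is_derive_C (fun _ => ?c) _ _ => apply is_derive_C_const
  | |- is_derive_C (fun x => Cplus _ _) _ _ => apply is_derive_C_plus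
  | |- is_derive_C (fun x => Cminus _ _) _ _ => apply is_derive_C_minus
  | |- is_derive_C (fun x => Copp _) _ _ => apply is_derive_C_opp
  | |- is_derive_C (fun x => Cmult _ _) _ _ => apply is_derive_C_mult
  | |- is_derive_C (fun x => Cinv _) _ _ => apply is_derive_C_inv
  | |- is_derive_C (fun x => RtoC (px (normalize (line ?j ?s x)))) _ _ =>
      apply (is_derive_C_coord e1 j s); assumption
  | |- is_derive_C (fun x => RtoC (py (normalize (line ?j ?s x)))) _ _ =>
      apply (is_derive_C_coord e2 j s); assumption
  | |- is_derive_C (fun x => RtoC (pz (normalize (line ?j ?s x)))) _ _ =>
      apply (is_derive_C_coord e3 j s); assumption
  end.

Ltac auto_derive_C :=
  unfold Zst, Zbar, Xt1, Xt2, Xt3, Cdiv;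
  repeat match goal with |- is_derive_C _ _ _ => auto_derive_C_step end.

(* [nsatz] treats [x ^ n] as an atom, hence the expansion of powers before it. *)
Ltac sphere_identity s Hs :=
  let a := fresh "a" in let b := fresh "b" in let c := fresh "c" in
  destruct s as [[a b] c]; unfold on_sphere in Hs; cbn [px py pz fst snd] in *;
  assert (a * a + b * b + c * c = 1) by nra; clear Hs;
  repeat apply injective_projections; csimpl;
  field_simplify_eq; cbn [pow]; first [lra | nsatz].

(** * The stereographic coordinate *)

Lemma one_minus_RtoC_neq_0 (r : R) : r < 1 -> (1 - RtoC r)%C <> 0%C.
Proof. intros Hr E; apply (f_equal Re) in E; cbn in E; lra. Qed.

Lemma Cinv_neq_0 (z : C) : z <> 0%C -> (/ z)%C <> 0%C.
Proof. intros Hz E; apply C1_nz; now rewrite <- (Cinv_l z Hz), E, Cmult_0_l. Qed.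

Lemma Ci_sqr : (Ci * Ci = -1)%C.
Proof. apply injective_projections; cbn; ring. Qed.

Lemma Cinv_Ci_div (w : C) : w <> 0%C -> (/ (2 * Ci / w))%C = (- Ci / 2 * w)%C.
Proof.
  intros Hw.
  assert (H2 : (2 : C) <> 0%C) by (intros E; injection E; lra).
  assert (H : (2 * Ci / w * (- Ci / 2 * w))%C = 1%C).
  { transitivity (- (Ci * Ci))%C; [field; auto | rewrite Ci_sqr; ring]. }
  rewrite <- (Cmult_1_r (/ _)), <- H, Cmult_assoc, Cinv_l, Cmult_1_l; [reflexivity |].
  intros E; rewrite E, Cmult_0_l in H; injection H; lra.
Qed.

Definition gradZ (q : pt) : cvec :=
  cscale (/ (1 - Xt3 q))%C (1 - Xt1 q * Zst q, Ci - Xt2 q * Zst q, Zst q - Xt3 q * Zst q)%C.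

Definition gradZbar (q : pt) : cvec :=
  cscale (/ (1 - Xt3 q))%C (1 - Xt1 q * Zbar q, - Ci - Xt2 q * Zbar q, Zbar q - Xt3 q * Zbar q)%C.

Definition Wbar (q : pt) : C := (Xt1 q - Ci * Xt2 q)%C.

Definition gradWbar (q : pt) : cvec :=
  (1 - Xt1 q * Wbar q, - Ci - Xt2 q * Wbar q, - Xt3 q * Wbar q)%C.

(* d/dZ in ambient coordinates *)
Definition Ycirc_formula (q : pt) : cvec :=
  (/ 4 * ((1 - Xt3 q) * (1 - Xt3 q) - Wbar q * Wbar q),
   - Ci / 4 * ((1 - Xt3 q) * (1 - Xt3 q) + Wbar q * Wbar q),
   / 2 * Wbar q * (1 - Xt3 q))%C.

Section StereographicChart.

Variable s : pt.
Hypotheses (Hs : on_sphere s) (Hz : pz s < 1).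

Lemma has_sgrad_Zst : has_sgrad Zst s (gradZ s).
Proof.
  intros j; pose proof (one_minus_RtoC_neq_0 _ Hz).
  eapply is_derive_C_eq; [auto_derive_C; now rewrite normalize_line_at |].
  cbv beta; rewrite normalize_line_at by exact Hs.
  unfold gradZ, Zst, Xt1, Xt2, Xt3; destruct j; cbn [ccomp cscale cv1 cv2 cv3 fst snd kron coord];
    rewrite ?RtoC_minus, ?RtoC_mult; field; auto.
Qed.

Lemma has_sgrad_Zbar : has_sgrad Zbar s (gradZbar s).
Proof.
  intros j; pose proof (one_minus_RtoC_neq_0 _ Hz).
  eapply is_derive_C_eq; [auto_derive_C; now rewrite normalize_line_at |].
  cbv beta; rewrite normalize_line_at by exact Hs.
  unfold gradZbar, Zbar, Xt1, Xt2, Xt3; destruct j; cbn [ccomp cscale cv1 cv2 cv3 fst snd kron coord];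
    rewrite ?RtoC_minus, ?RtoC_mult; field; auto.
Qed.

Lemma has_sdiv_gradZ : has_sdiv gradZ s 0.
Proof.
  pose proof (one_minus_RtoC_neq_0 _ Hz).
  eapply has_sdiv_eq; [apply has_sdivI; unfold gradZ; cbn [cscale cv1 cv2 cv3 fst snd];
    auto_derive_C; now rewrite normalize_line_at |].
  cbv beta; rewrite !normalize_line_at by exact Hs.
  unfold Zst, Xt1, Xt2, Xt3; cbn [kron coord]; sphere_identity s Hs.
Qed.

Lemma cdot_gradZ_gradZ : cdot (gradZ s) (gradZ s) = 0%C.
Proof. unfold cdot, gradZ, Zst, Xt1, Xt2, Xt3; sphere_identity s Hs. Qed.

Lemma cdot_gradZ_gradWbar : cdot (gradZ s) (gradWbar s) = 1%C.
Proof. unfold cdot, gradZ, gradWbar, Wbar, Zst, Xt1, Xt2, Xt3; sphere_identity s Hs. Qed.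

Lemma eps_pair_Zst_Zbar : eps_pair Zst Zbar s = (2 * Ci / ((1 - Xt3 s) * (1 - Xt3 s)))%C.
Proof.
  unfold eps_pair; rewrite (sgrad_eq _ _ _ has_sgrad_Zst), (sgrad_eq _ _ _ has_sgrad_Zbar).
  unfold cdot, ccross, normal, gradZ, gradZbar, Zst, Zbar, Xt1, Xt2, Xt3; sphere_identity s Hs.
Qed.

Lemma eps_pair_Zst_Zbar_neq_0 : eps_pair Zst Zbar s <> 0%C.
Proof.
  rewrite eps_pair_Zst_Zbar.
  assert (H2 : RtoC 2 <> 0%C) by (intros E; injection E; lra).
  pose proof (one_minus_RtoC_neq_0 _ Hz).
  unfold Cdiv; repeat apply Cmult_neq_0; auto using Ci_nz, Cinv_neq_0, Cmult_neq_0.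
Qed.

Lemma Ycirc_eq : Ycirc s = Ycirc_formula s.
Proof.
  unfold Ycirc, eps_grad; rewrite eps_pair_Zst_Zbar, (sgrad_eq _ _ _ has_sgrad_Zbar).
  rewrite Cinv_Ci_div by (apply Cmult_neq_0; apply one_minus_RtoC_neq_0, Hz).
  unfold Ycirc_formula, cscale, ccross, normal, gradZbar, Wbar, Zbar, Xt1, Xt2, Xt3.
  sphere_identity s Hs.
Qed.

End StereographicChart.

Lemma has_sgrad_Wbar (s : pt) : on_sphere s -> has_sgrad Wbar s (gradWbar s).
Proof.
  intros Hs j; eapply is_derive_C_eq; [unfold Wbar; auto_derive_C |].
  cbv beta; rewrite normalize_line_at by exact Hs.
  unfold gradWbar, Wbar, Xt1, Xt2, Xt3; destruct j; cbn [ccomp cv1 cv2 cv3 fst snd kron coord];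
    rewrite ?RtoC_minus, ?RtoC_mult; ring.
Qed.

Lemma has_sdiv_gradWbar (s : pt) : on_sphere s -> has_sdiv gradWbar s (-2 * Wbar s)%C.
Proof.
  intros Hs.
  eapply has_sdiv_eq; [apply has_sdivI; unfold gradWbar, Wbar; cbn [cv1 cv2 cv3 fst snd]; auto_derive_C |].
  cbv beta; rewrite !normalize_line_at by exact Hs.
  unfold Wbar, Xt1, Xt2, Xt3; cbn [kron coord]; sphere_identity s Hs.
Qed.

Lemma has_sdiv_Ycirc_formula (s : pt) : on_sphere s -> has_sdiv Ycirc_formula s (- Wbar s)%C.
Proof.
  intros Hs.
  eapply has_sdiv_eq; [apply has_sdivI; unfold Ycirc_formula, Wbar; cbn [cv1 cv2 cv3 fst snd]; auto_derive_C |].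
  cbv beta; rewrite !normalize_line_at by exact Hs.
  unfold Wbar, Xt1, Xt2, Xt3; cbn [kron coord]; sphere_identity s Hs.
Qed.

Lemma cdot_sgrad_Zst_Ycirc (s : pt) :
  eps_pair Zst Zbar s <> 0%C -> cdot (sgrad Zst s) (Ycirc s) = 1%C.
Proof.
  unfold Ycirc, eps_grad, eps_pair.
  destruct (sgrad Zst s) as [[u1 u2] u3], (sgrad Zbar s) as [[v1 v2] v3], (normal s) as [[n1 n2] n3].
  unfold cdot, ccross, cscale, cv1, cv2, cv3; cbn [fst snd]; intros H; field; exact H.
Qed.

Lemma cdot_gradZ_Ycirc_formula (s : pt) : on_sphere s -> pz s < 1 ->
  cdot (gradZ s) (Ycirc_formula s) = 1%C.
Proof.
  intros Hs Hz; rewrite <- (sgrad_eq _ _ _ (has_sgrad_Zst s Hs Hz)), <- Ycirc_eq by assumption.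
  now apply cdot_sgrad_Zst_Ycirc, eps_pair_Zst_Zbar_neq_0.
Qed.

(** * The divergence of [Y] and its Laplacian *)

Definition stereo_domain (k : Z) (q : pt) : Prop :=
  on_sphere q /\ pz q < 1 /\ ((k < 0)%Z -> -1 < pz q).

Lemma locally_lt_of_is_derive (f : R -> R) (t0 l M : R) :
  is_derive f t0 l -> f t0 < M -> locally t0 (fun t => f t < M).
Proof.
  intros Hd Hl; exact (ex_derive_continuous f t0 (ex_intro _ l Hd) (fun y => y < M) (open_lt M (f t0) Hl)).
Qed.

Lemma locally_gt_of_is_derive (f : R -> R) (t0 l M : R) :
  is_derive f t0 l -> M < f t0 -> locally t0 (fun t => M < f t).
Proof.
  intros Hd Hl; exact (ex_derive_continuous f t0 (ex_intro _ l Hd) (fun y => M < y) (open_gt M (f t0) Hl)).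
Qed.

Lemma line_open_stereo_domain (k : Z) : line_open (stereo_domain k).
Proof.
  intros s j (Hs & Hz & Hk).
  pose proof (is_derive_coord_normalize e3 j s Hs) as D3.
  assert (Hsq : locally (coord j s) (fun t =>
            0 < px (line j s t) ^ 2 + py (line j s t) ^ 2 + pz (line j s t) ^ 2)).
  { eapply locally_gt_of_is_derive.
    - destruct j; cbn [line px py pz fst snd]; auto_derive;
        [exact I | reflexivity | exact I | reflexivity | exact I | reflexivity].
    - rewrite line_at_coord; unfold on_sphere in Hs; lra. }
  assert (Hlt : locally (coord j s) (fun t => pz (normalize (line j s t)) < 1)).
  { eapply locally_lt_of_is_derive; [exact D3 |]; cbv beta; now rewrite normalize_line_at. }
  assert (Hgt : locally (coord j s) (fun t => (k < 0)%Z -> -1 < pz (normalize (line j s t)))).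
  { destruct (Z_lt_le_dec k 0) as [Hneg | Hpos]; [| apply filter_forall; intros; lia].
    eapply filter_imp; [| apply (locally_gt_of_is_derive _ _ _ (-1) D3)]; [auto |].
    cbv beta; rewrite normalize_line_at; auto. }
  eapply filter_imp; [| apply filter_and; [exact Hsq | apply filter_and; [exact Hlt | exact Hgt]]].
  intros t (H1 & H2 & H3); split; [now apply on_sphere_normalize | auto].
Qed.

Lemma stereo_domain_Zst (k : Z) (q : pt) : stereo_domain k q -> Zst q <> 0%C \/ (0 <= k)%Z.
Proof.
  intros (Hs & Hz & Hk); destruct (Z_lt_le_dec k 0) as [Hneg | Hpos]; [left | now right].
  specialize (Hk Hneg); pose proof (one_minus_RtoC_neq_0 _ Hz) as Hw.
  intros E; assert (Exy : (Xt1 q + Ci * Xt2 q)%C = 0%C).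
  { transitivity (Zst q * (1 - Xt3 q))%C; [unfold Zst, Cdiv; field; exact Hw | now rewrite E, Cmult_0_l]. }
  unfold Xt1, Xt2 in Exy; pose proof (f_equal Re Exy) as Ex; pose proof (f_equal Im Exy) as Ey.
  cbn in Ex, Ey; unfold on_sphere in Hs; nra.
Qed.

Lemma stereo_domain_Zst_regular (k : Z) (q : pt) :
  stereo_domain k q -> zpow_regular (IZR k) (k - 1) (Zst q).
Proof.
  intros Hq; rewrite <- (Rmult_1_l (IZR k)); apply zpow_regular_deriv.
  destruct (stereo_domain_Zst k q Hq); [now left | now right; left].
Qed.

Definition psi (k : Z) (q : pt) : C :=
  (IZR k * Czpow (Zst q) (k - 1) - Czpow (Zst q) k * Wbar q)%C.

Definition grad_psi (k : Z) (q : pt) : cvec :=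
  cvminus (cscale (RtoC (IZR k * IZR (k - 1)) * Czpow (Zst q) (k - 1 - 1)) (gradZ q))
          (cvplus (cscale (Czpow (Zst q) k) (gradWbar q))
                  (cscale (Wbar q) (cscale (IZR k * Czpow (Zst q) (k - 1)) (gradZ q)))).

Lemma sdiv_Yfield (m : Z) (q : pt) : stereo_domain (m + 1) q -> sdiv (Yfield m) q = psi (m + 1) q.
Proof.
  intros Hq; pose proof Hq as (Hs & Hz & _).
  apply sdiv_eq, (has_sdiv_ext_loc (fun q => cscale (Czpow (Zst q) (m + 1)) (Ycirc_formula q))).
  - intros j; eapply filter_imp; [| exact (line_open_stereo_domain _ q j Hq)].
    intros t (Ht & Htz & _); unfold Yfield; now rewrite (Ycirc_eq _ Ht Htz).
  - eapply has_sdiv_eq.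
    + apply has_sdiv_scal; [exact Hs | | now apply has_sdiv_Ycirc_formula].
      apply has_sgrad_Czpow; [exact Hs | now apply has_sgrad_Zst | now apply stereo_domain_Zst].
    + rewrite cdot_cscale_l, cdot_gradZ_Ycirc_formula by assumption; unfold psi; ring.
Qed.

Lemma has_sgrad_psi (k : Z) (q : pt) : stereo_domain k q -> has_sgrad (psi k) q (grad_psi k q).
Proof.
  intros Hq; pose proof Hq as (Hs & Hz & _).
  apply has_sgrad_minus.
  - apply has_sgrad_scal_Czpow; [exact Hs | now apply has_sgrad_Zst | now apply stereo_domain_Zst_regular].
  - apply has_sgrad_mult; [exact Hs | | now apply has_sgrad_Wbar].
    apply has_sgrad_Czpow; [exact Hs | now apply has_sgrad_Zst | now apply stereo_domain_Zst].
Qed.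

Lemma has_sdiv_grad_psi (k : Z) (s : pt) : stereo_domain k s ->
  has_sdiv (grad_psi k) s (-2 * psi k s)%C.
Proof.
  intros Hk; pose proof Hk as (Hs & Hz & _).
  pose proof (stereo_domain_Zst_regular k s Hk) as Hreg.
  assert (HZ : has_sgrad Zst s (gradZ s)) by now apply has_sgrad_Zst.
  eapply has_sdiv_eq.
  - apply has_sdiv_minus; [| apply has_sdiv_plus].
    + apply has_sdiv_scal; [exact Hs | | now apply has_sdiv_gradZ].
      apply has_sgrad_scal_Czpow; [exact Hs | exact HZ | now apply zpow_regular_deriv].
    + apply has_sdiv_scal; [exact Hs | | now apply has_sdiv_gradWbar].
      apply has_sgrad_Czpow; [exact Hs | exact HZ | now apply stereo_domain_Zst].
    + apply has_sdiv_scal; [exact Hs | now apply has_sgrad_Wbar |].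
      apply has_sdiv_scal; [exact Hs | | now apply has_sdiv_gradZ].
      apply has_sgrad_scal_Czpow; [exact Hs | exact HZ | exact Hreg].
  - rewrite !cdot_cscale_l, !cdot_cscale_r, cdot_gradZ_gradZ, (cdot_comm (gradWbar s)),
      cdot_gradZ_gradWbar by assumption.
    unfold psi; ring.
Qed.

Lemma stereo_domain_of (m : Z) (p : pt) : on_sphere p -> p <> north_pole ->
  ((m + 1 < 0)%Z -> p <> south_pole) -> stereo_domain (m + 1) p.
Proof.
  destruct p as [[a b] c]; unfold on_sphere, north_pole, south_pole; cbn [px py pz fst snd].
  intros Hs Hn Hso; split; [exact Hs | split].
  - destruct (Rlt_dec c 1) as [H | H]; [exact H | exfalso].
    assert (c = 1) by nra; assert (a = 0) by nra; assert (b = 0) by nra; subst; now apply Hn.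
  - intros Hk; specialize (Hso Hk).
    destruct (Rlt_dec (-1) c) as [H | H]; [exact H | exfalso].
    assert (c = -1) by nra; assert (a = 0) by nra; assert (b = 0) by nra; subst; now apply Hso.
Qed.

Theorem mainTheorem18 (m : Z) (p : pt) :
  on_sphere p -> p <> north_pole ->
  ((m + 1 < 0)%Z -> p <> south_pole) ->
  Cplus (slap (sdiv (Yfield m)) p) (Cmult (RtoC 2) (sdiv (Yfield m) p)) = RtoC 0.
Proof.
  intros Hs Hn Hso.
  pose proof (stereo_domain_of m p Hs Hn Hso) as Hp.
  pose proof (line_open_stereo_domain (m + 1)) as HU.
  assert (Hlap : slap (sdiv (Yfield m)) p = (-2 * psi (m + 1) p)%C).
  { apply (slap_eq _ _ (grad_psi (m + 1)) _ _ HU Hp); [| now apply has_sdiv_grad_psi].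
    intros q Hq; apply (has_sgrad_ext_on _ (psi (m + 1)) _ _ _ HU Hq).
    - intros q' Hq'; symmetry; now apply sdiv_Yfield.
    - now apply has_sgrad_psi. }
  rewrite Hlap, sdiv_Yfield by exact Hp; ring.
Qed.
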